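(* Let $k>1$ be a square-free natural number and let $\mathfrak{n}^{\mathbb{Q}}_k$ be the rational Lie algebra with basis $X_1,X_2,X_3,X_4,Z_1,Z_2$ and nonzero brackets (up to antisymmetry) $[X_1,X_3]=Z_1$, $[X_1,X_4]=Z_2$, $[X_2,X_3]=kZ_2$, $[X_2,X_4]=Z_1$. Then there exists an Anosov automorphism $f$ of $\mathfrak{n}^{\mathbb{Q}}_k$ with signature $\{2,4\}$.
   Context: An automorphism of a rational Lie algebra is Anosov if it is hyperbolic (no eigenvalue of absolute value $1$) and integer-like (characteristic polynomial with integer coefficients and determinant $\pm1$). The signature of such an automorphism is the set $\{p,q\}$ where $p$ is the number of eigenvalues (with multiplicity) of absolute value $<1$ and $q$ the number of absolute value $>1$. *)

From HB Require Import structures.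
From mathcomp Require Import all_boot all_order all_algebra all_field.
Set Implicit Arguments. Unset Strict Implicit. Unset Printing Implicit Defensive.
Import Order.TTheory GRing.Theory Num.Theory.
Local Open Scope ring_scope.

(* Vectors of Q^6 are row vectors 'rV[rat]_6, in coordinates w.r.t. the basis
   X1, X2, X3, X4, Z1, Z2 (indices 0,1,2,3,4,5). *)
Definition e6 (i : nat) : 'rV[rat]_6 := delta_mx 0 (inord i).

Definition nk_basis_bracket (k : nat) (i j : 'I_6) : 'rV[rat]_6 :=
  let isij (a b : nat) := ((val i == a) && (val j == b))%N in
  if isij 0 2 then e6 4
  else if isij 2 0 then - e6 4
  else if isij 0 3 then e6 5
  else if isij 3 0 then - e6 5
  else if isij 1 2 then k%:R *: e6 5
  else if isij 2 1 then - (k%:R *: e6 5)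
  else if isij 1 3 then e6 4
  else if isij 3 1 then - e6 4
  else 0.

Definition nk_bracket (k : nat) (u v : 'rV[rat]_6) : 'rV[rat]_6 :=
  \sum_(i < 6) \sum_(j < 6) (u 0 i * v 0 j) *: nk_basis_bracket k i j.

Definition is_nk_automorphism (k : nat) (A : 'M[rat]_6) : Prop :=
  A \in unitmx /\
  forall u v : 'rV[rat]_6, nk_bracket k (u *m A) (v *m A) = nk_bracket k u v *m A.

Definition eigenvalues (n : nat) (A : 'M[rat]_n) : seq algC :=
  sval (closed_field_poly_normal (map_poly (ratr : rat -> algC) (char_poly A))).

Definition hyperbolic (n : nat) (A : 'M[rat]_n) : Prop :=
  forall z : algC, z \in eigenvalues A -> `|z| != 1.

Definition integer_like (n : nat) (A : 'M[rat]_n) : Prop :=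
  char_poly A \is a polyOver Num.int /\ (\det A = 1 \/ \det A = -1).

Definition anosov (n : nat) (A : 'M[rat]_n) : Prop :=
  hyperbolic A /\ integer_like A.

Definition n_contracting (n : nat) (A : 'M[rat]_n) : nat :=
  count (fun z : algC => `|z| < 1) (eigenvalues A).
Definition n_expanding (n : nat) (A : 'M[rat]_n) : nat :=
  count (fun z : algC => 1 < `|z|) (eigenvalues A).

Definition has_signature (n : nat) (A : 'M[rat]_n) (p q : nat) : Prop :=
  (n_contracting A = p /\ n_expanding A = q) \/
  (n_contracting A = q /\ n_expanding A = p).

Definition squarefree (k : nat) : Prop :=
  forall p : nat, prime p -> ~~ (p * p %| k)%N.

(* Let x^2 - k y^2 = 1 be a nontrivial solution of Pell's equation, which
   exists because k is not a square.  The automorphism is block diagonal: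
   on the center span(Z1, Z2) it is the matrix of multiplication by the unit
   mu = x + y sqrt k of Z[sqrt k], and on span(X1, .., X4) it is the matrix
       X1 |-> -y X3 - x X4,   X2 |-> -x X3 - k y X4,
       X3 |-> X2 + 2 X3,      X4 |-> X1 + 2 X4,
   chosen so that the induced map on brackets is the central block.  Its
   characteristic polynomial is PM x * PN x with PN x = (X - mu)(X - mu') and
   PM x = (s + mu)(s + mu') where s = X^2 - 2X and mu' = 1/mu.  Hence its
   eigenvalues are 1 +- i sqrt (mu - 1), 1 +- sqrt (1 - mu'), mu and mu':
   two of modulus < 1, four of modulus > 1, and none of modulus 1. *)

From Stdlib Require ZArith Reals Lia Lra Psatz List Classical.

Module Pell.
Import ZArith Reals Lia Lra Psatz List Classical.

Lemma pigeonhole (A B : Type) (f : A -> B) (l : list A) (r : list B) :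
  NoDup l -> (forall x, In x l -> In (f x) r) -> (length r < length l)%nat ->
  exists x y, In x l /\ In y l /\ x <> y /\ f x = f y.
Proof.
intros Hl Hin Hlen. apply NNPP; intro Hno.
assert (Hnd : NoDup (map f l)).
{ apply NoDup_map_NoDup_ForallPairs; auto.
  intros x y Hx Hy Hf. apply NNPP; intro Hne. apply Hno. exists x, y; auto. }
assert (Hinc : incl (map f l) r).
{ intros b Hb. apply in_map_iff in Hb. destruct Hb as [x [<- Hx]]. auto. }
pose proof (NoDup_incl_length Hnd Hinc). rewrite length_map in *. lia.
Qed.

Local Open Scope Z_scope.

Definition zrange (lo : Z) (n : nat) : list Z :=
  map (fun i => lo + Z.of_nat i) (seq 0 n).

Lemma in_zrange lo n x : lo <= x < lo + Z.of_nat n -> In x (zrange lo n).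
Proof.
intros H. unfold zrange. apply in_map_iff. exists (Z.to_nat (x - lo)).
split; [lia|]. apply in_seq. lia.
Qed.

Lemma length_zrange lo n : length (zrange lo n) = n.
Proof. unfold zrange. now rewrite length_map, length_seq. Qed.

Local Open Scope R_scope.

Lemma floor_sqrt (n : Z) : (0 <= n)%Z ->
  IZR (Z.sqrt n) <= sqrt (IZR n) < IZR (Z.sqrt n) + 1.
Proof.
intros Hn. destruct (Z.sqrt_spec n Hn) as [H1 H2].
pose proof (Z.sqrt_nonneg n) as Hs. set (s := Z.sqrt n) in *.
split.
- rewrite <- (sqrt_square (IZR s)) by (apply IZR_le; lia).
  apply sqrt_le_1_alt. rewrite <- mult_IZR. apply IZR_le; lia.
- replace (IZR s + 1) with (IZR (Z.succ s)) by (rewrite succ_IZR; ring).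
  rewrite <- (sqrt_square (IZR (Z.succ s))) by (apply IZR_le; lia).
  apply sqrt_lt_1_alt. split; [apply IZR_le; lia|].
  rewrite <- mult_IZR. apply IZR_lt; lia.
Qed.

Lemma floor_mul_sqrt (k j : Z) : (0 <= k)%Z -> (0 <= j)%Z ->
  IZR (Z.sqrt (k * (j * j))) <= IZR j * sqrt (IZR k) < IZR (Z.sqrt (k * (j * j))) + 1.
Proof.
intros Hk Hj.
replace (IZR j * sqrt (IZR k)) with (sqrt (IZR (k * (j * j)))).
- apply floor_sqrt. nia.
- rewrite mult_IZR, sqrt_mult_alt by (apply IZR_le; lia).
  rewrite mult_IZR, sqrt_square by (apply IZR_le; lia). ring.
Qed.

(* The N + 1 fractional parts
   of j sqrt k (0 <= j <= N), measured at precision 1/N, cannot be distinct. *)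
Lemma dirichlet (k N : Z) : (1 <= k)%Z -> (1 <= N)%Z ->
  exists p q, (1 <= q <= N)%Z /\ Rabs (IZR N * (IZR q * sqrt (IZR k) - IZR p)) < 1.
Proof.
intros Hk HN. set (t := sqrt (IZR k)).
set (a := fun j : Z => Z.sqrt (k * (j * j))).
set (b := fun j : Z => Z.sqrt (k * ((N * j) * (N * j)))).
(* c j = floor (N j t) - N floor (j t), the first digit of j t in base N *)
set (c := fun j : nat => (b (Z.of_nat j) - N * a (Z.of_nat j))%Z).
assert (Fa : forall j, (0 <= j)%Z -> IZR (a j) <= IZR j * t < IZR (a j) + 1).
{ intros j Hj. apply floor_mul_sqrt; lia. }
assert (Fb : forall j, (0 <= j)%Z -> IZR (b j) <= IZR N * IZR j * t < IZR (b j) + 1).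
{ intros j Hj. rewrite <- mult_IZR. apply floor_mul_sqrt; lia. }
assert (Hc : forall j, (0 <= c j < N)%Z).
{ intros j. unfold c. pose proof (Fa (Z.of_nat j) ltac:(lia)) as [A1 A2].
  pose proof (Fb (Z.of_nat j) ltac:(lia)) as [B1 B2].
  assert (HN' : 1 <= IZR N) by (apply IZR_le; lia).
  assert (L : IZR (N * a (Z.of_nat j)) < IZR (b (Z.of_nat j) + 1))
    by (rewrite mult_IZR, plus_IZR; nra).
  assert (R : IZR (b (Z.of_nat j)) < IZR (N * a (Z.of_nat j) + N))
    by (rewrite plus_IZR, mult_IZR; nra).
  apply lt_IZR in L. apply lt_IZR in R. lia. }
assert (Close : forall x y : nat, (x < y)%nat -> (y <= Z.to_nat N)%nat -> c x = c y ->
   exists p q, (1 <= q <= N)%Z /\ Rabs (IZR N * (IZR q * t - IZR p)) < 1).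
{ intros x y Hxy Hy Hcxy.
  exists (a (Z.of_nat y) - a (Z.of_nat x))%Z, (Z.of_nat y - Z.of_nat x)%Z.
  split; [lia|].
  pose proof (Fb (Z.of_nat x) ltac:(lia)) as [B1 B2].
  pose proof (Fb (Z.of_nat y) ltac:(lia)) as [B3 B4].
  unfold c in Hcxy.
  assert (E : IZR (b (Z.of_nat y)) - IZR (b (Z.of_nat x)) =
              IZR N * (IZR (a (Z.of_nat y)) - IZR (a (Z.of_nat x)))).
  { rewrite <- !minus_IZR, <- mult_IZR. apply IZR_eq. lia. }
  rewrite !minus_IZR. apply Rabs_def1; nra. }
destruct (pigeonhole _ _ c (seq 0 (S (Z.to_nat N))) (zrange 0 (Z.to_nat N)))
  as [x [y [Hx [Hy [Hxy Hcxy]]]]].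
- apply seq_NoDup.
- intros j _. apply in_zrange. specialize (Hc j). lia.
- rewrite length_zrange, length_seq. lia.
- apply in_seq in Hx. apply in_seq in Hy.
  destruct (Nat.lt_total x y) as [H|[H|H]].
  + apply (Close x y); lia.
  + contradiction.
  + apply (Close y x); lia.
Qed.

Lemma approx_norm_bound (k N p q : Z) : (1 <= k)%Z -> (1 <= q <= N)%Z ->
  Rabs (IZR N * (IZR q * sqrt (IZR k) - IZR p)) < 1 ->
  (- (2 * k) <= p * p - k * (q * q) <= 2 * k)%Z.
Proof.
intros Hk Hq H. set (t := sqrt (IZR k)) in *.
assert (Ht2 : t * t = IZR k) by (apply sqrt_sqrt; apply IZR_le; lia).
assert (Ht0 : 0 <= t) by apply sqrt_pos.
assert (Hk1 : 1 <= IZR k) by (apply IZR_le; lia).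
assert (Hq1 : 1 <= IZR q) by (apply IZR_le; lia).
assert (HqN : IZR q <= IZR N) by (apply IZR_le; lia).
set (e := IZR q * t - IZR p) in *.
apply Rabs_def2 in H. destruct H as [H1 H2].
assert (Hu : - 1 < IZR q * e < 1) by (split; destruct (Rle_lt_dec 0 e); nra).
assert (He : - 1 < e < 1) by (split; nra).
assert (Htk : t <= IZR k) by nra.
(* p^2 - k q^2 = e^2 - 2 t (q e) *)
assert (V : IZR (p * p - k * (q * q)) = e * e - 2 * t * (IZR q * e)).
{ rewrite minus_IZR, !mult_IZR. unfold e. rewrite <- Ht2. ring. }
assert (B : IZR (- (2 * k) - 1) < IZR (p * p - k * (q * q)) < IZR (2 * k + 1)).
{ rewrite V, minus_IZR, plus_IZR, opp_IZR, !mult_IZR. split; nra. }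
destruct B as [L R]. apply lt_IZR in L. apply lt_IZR in R. lia.
Qed.

Lemma approx_error_pos (k p q : Z) : (1 <= k)%Z -> (q <> 0)%Z ->
  (forall p q : Z, q <> 0%Z -> (p * p <> k * (q * q))%Z) ->
  0 < Rabs (IZR q * sqrt (IZR k) - IZR p).
Proof.
intros Hk Hq Hns. apply Rabs_pos_lt. intro E.
assert (Hs : sqrt (IZR k) * sqrt (IZR k) = IZR k)
  by (apply sqrt_sqrt; apply IZR_le; lia).
apply (Hns p q Hq), eq_IZR. rewrite !mult_IZR, <- Hs.
replace (IZR p) with (IZR q * sqrt (IZR k)) by lra. ring.
Qed.

Lemma min_list_pos (l : list R) : (forall r, In r l -> 0 < r) ->
  0 < fold_right Rmin 1 l /\ forall r, In r l -> fold_right Rmin 1 l <= r.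
Proof.
induction l as [|x l IH]; intros H; simpl.
- split; [lra | tauto].
- destruct IH as [IH1 IH2]. { intros r Hr; apply H; simpl; auto. }
  split.
  + apply Rmin_glb_lt; auto. apply H; simpl; auto.
  + intros r [<-|Hr]; [apply Rmin_l|]. eapply Rle_trans; [apply Rmin_r | auto].
Qed.

Definition small_norm (k : Z) (pq : Z * Z) : Prop :=
  (1 <= snd pq)%Z /\
  (- (2 * k) <= fst pq * fst pq - k * (snd pq * snd pq) <= 2 * k)%Z.

(* There are arbitrarily many such pairs: a new one is obtained from a
   Dirichlet approximation finer than all those already found. *)
Lemma many_small_norm_pairs (k : Z) : (1 <= k)%Z ->
  (forall p q : Z, q <> 0%Z -> (p * p <> k * (q * q))%Z) ->
  forall n : nat, exists L : list (Z * Z),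
    NoDup L /\ length L = n /\ forall pq, In pq L -> small_norm k pq.
Proof.
intros Hk Hns n. induction n as [|n IH].
- exists nil. split; [constructor | split; [reflexivity | simpl; tauto]].
- destruct IH as [L [HL [Hlen Hsmall]]].
  set (err := fun pq : Z * Z => Rabs (IZR (snd pq) * sqrt (IZR k) - IZR (fst pq))).
  destruct (min_list_pos (map err L)) as [Hd0 Hd].
  { intros r Hr. apply in_map_iff in Hr. destruct Hr as [pq [<- Hpq]].
    apply approx_error_pos; auto. destruct (Hsmall pq Hpq). lia. }
  set (d := fold_right Rmin 1 (map err L)) in *.
  set (N := Z.max 1 (up (/ d))).
  assert (HN : (1 <= N)%Z) by lia.
  assert (HNd : / d < IZR N).
  { destruct (archimed (/ d)) as [A _]. eapply Rlt_le_trans; [apply A|].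
    apply IZR_le. lia. }
  destruct (dirichlet k N Hk HN) as [p [q [Hq Hpq]]].
  exists ((p, q) :: L). split; [|split].
  + constructor; auto. intro Hin.
    assert (Hle : d <= err (p, q)) by (apply Hd; apply in_map; auto).
    unfold err in Hle; simpl in Hle.
    rewrite Rabs_mult, (Rabs_right (IZR N)) in Hpq
      by (apply Rle_ge; apply IZR_le; lia).
    assert (1 < IZR N * d).
    { apply (Rmult_lt_compat_r d) in HNd; auto. rewrite Rinv_l in HNd; lra. }
    assert (0 < IZR N) by (apply IZR_lt; lia).
    nra.
  + simpl; lia.
  + intros pq [<-|Hpq']; auto. split; simpl; [lia | eapply approx_norm_bound; eauto].
Qed.

Local Open Scope Z_scope.

Lemma mod_in_zrange (a m B : Z) : m <> 0 -> - B <= m <= B ->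
  In (a mod m) (zrange (- B) (Z.to_nat (2 * B + 1))).
Proof.
intros Hm HB. apply in_zrange.
destruct (Z_lt_le_dec 0 m).
- pose proof (Z.mod_pos_bound a m l). lia.
- pose proof (Z.mod_neg_bound a m ltac:(lia)). lia.
Qed.

(* Two distinct pairs with the same nonzero norm m and congruent modulo m
   give a nontrivial solution of Pell's equation: (p1 - q1 sqrt k) times
   (p2 + q2 sqrt k), divided by m, has integral coordinates and norm 1. *)
Lemma pell_of_congruent_pairs (k m p1 q1 p2 q2 : Z) :
  p1 * p1 - k * (q1 * q1) = m -> p2 * p2 - k * (q2 * q2) = m -> m <> 0 ->
  p1 mod m = p2 mod m -> q1 mod m = q2 mod m -> 1 <= q1 -> 1 <= q2 ->
  (p1, q1) <> (p2, q2) ->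
  exists x y, x * x - k * (y * y) = 1 /\ y <> 0.
Proof.
intros Hm1 Hm2 Hm0 Ep Eq Hq1 Hq2 Hne.
pose proof (Z.div_mod p1 m Hm0) as D1. pose proof (Z.div_mod p2 m Hm0) as D2.
pose proof (Z.div_mod q1 m Hm0) as D3. pose proof (Z.div_mod q2 m Hm0) as D4.
set (a := p2 / m - p1 / m). set (b := q2 / m - q1 / m).
assert (Ep2 : p2 = p1 + m * a) by (unfold a; lia).
assert (Eq2 : q2 = q1 + m * b) by (unfold b; lia).
clearbody a b. clear D1 D2 D3 D4 Ep Eq.
set (X := 1 + p1 * a - k * q1 * b). set (Y := p1 * b - a * q1).
assert (EX : m * X = p1 * p2 - k * q1 * q2) by (unfold X; subst p2 q2 m; ring).
assert (EY : m * Y = p1 * q2 - p2 * q1) by (unfold Y; subst p2 q2; ring).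
assert (Brahmagupta : (p1 * p2 - k * q1 * q2) * (p1 * p2 - k * q1 * q2)
                      - k * ((p1 * q2 - p2 * q1) * (p1 * q2 - p2 * q1))
                    = (p1 * p1 - k * (q1 * q1)) * (p2 * p2 - k * (q2 * q2))) by ring.
rewrite Hm1, Hm2, <- EX, <- EY in Brahmagupta.
exists X, Y. split.
- assert (Hmm : m * m <> 0) by (intro H; apply Z.mul_eq_0 in H; tauto).
  apply (Z.mul_reg_l _ _ (m * m) Hmm).
  transitivity ((m * X) * (m * X) - k * ((m * Y) * (m * Y))); [ring|].
  rewrite Brahmagupta. ring.
- intro HY. rewrite HY in EY. apply Hne.
  assert (E1 : p1 * q2 = p2 * q1) by lia.
  assert (E2 : (q2 - q1) * (q2 + q1) * m = 0).
  { transitivity (q2 * q2 * (p1 * p1 - k * (q1 * q1)) - q1 * q1 * (p2 * p2 - k * (q2 * q2))).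
    - rewrite Hm1, Hm2. ring.
    - transitivity ((p1 * q2) * (p1 * q2) - (p2 * q1) * (p2 * q1)); [ring|].
      rewrite E1. ring. }
  apply Z.mul_eq_0 in E2. destruct E2 as [E2|E2]; [|contradiction].
  apply Z.mul_eq_0 in E2. destruct E2 as [E2|E2]; [|lia].
  assert (Hqq : q2 = q1) by lia. rewrite Hqq in E1 |- *.
  f_equal. apply (Z.mul_reg_r _ _ q1); lia.
Qed.

(* Pell's equation x^2 - k y^2 = 1 has a solution with y <> 0 whenever k >= 1
   is not a square: among the infinitely many pairs of small norm, two have
   the same norm and are congruent modulo it. *)
Lemma pell (k : Z) : 1 <= k ->
  (forall p q : Z, q <> 0 -> p * p <> k * (q * q)) ->
  exists x y, x * x - k * (y * y) = 1 /\ y <> 0.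
Proof.
intros Hk Hns.
set (Rl := zrange (- (2 * k)) (Z.to_nat (2 * (2 * k) + 1))).
set (classes := list_prod (list_prod Rl Rl) Rl).
set (cls := fun pq : Z * Z => let m := fst pq * fst pq - k * (snd pq * snd pq) in
             (m, fst pq mod m, snd pq mod m)).
destruct (many_small_norm_pairs k Hk Hns (S (length classes))) as [L [HL [Hlen Hsmall]]].
destruct (pigeonhole _ _ cls L classes HL) as [[p1 q1] [[p2 q2] [H1 [H2 [Hne Hc]]]]].
- intros [p q] Hpq. destruct (Hsmall _ Hpq) as [Hq Hm]. cbn [fst snd] in Hq, Hm.
  assert (Hm0 : p * p - k * (q * q) <> 0) by (intro E; apply (Hns p q); lia).
  unfold cls, classes; cbn [fst snd].
  apply in_prod_iff; split; [apply in_prod_iff; split|].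
  + apply in_zrange. rewrite Z2Nat.id by lia. lia.
  + apply mod_in_zrange; auto.
  + apply mod_in_zrange; auto.
- lia.
- destruct (Hsmall _ H1) as [Hq1 _]. destruct (Hsmall _ H2) as [Hq2 _].
  cbn [fst snd] in *. unfold cls in Hc; cbn [fst snd] in Hc.
  injection Hc as Em Ep Eq. rewrite <- Em in Ep, Eq.
  apply (pell_of_congruent_pairs k (p1 * p1 - k * (q1 * q1)) p1 q1 p2 q2); auto.
  intro E. apply (Hns p1 q1); lia.
Qed.

Lemma pell_nat (k : nat) : (1 <= k)%nat ->
  (forall p q : nat, q <> 0%nat -> (p * p <> k * (q * q))%nat) ->
  exists x y : nat, (x * x = k * (y * y) + 1)%nat /\ y <> 0%nat.
Proof.
intros Hk Hns.
destruct (pell (Z.of_nat k)) as [X [Y [HXY HY]]].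
- lia.
- intros p q Hq E. apply (Hns (Z.abs_nat p) (Z.abs_nat q)); [lia|].
  apply Nat2Z.inj. rewrite !Nat2Z.inj_mul, !Nat2Z.inj_abs_nat.
  rewrite <- !Z.abs_mul, E, !Z.abs_mul, (Z.abs_eq (Z.of_nat k)) by lia. reflexivity.
- exists (Z.abs_nat X), (Z.abs_nat Y). split; [|lia].
  apply Nat2Z.inj. rewrite Nat2Z.inj_add, !Nat2Z.inj_mul, !Nat2Z.inj_abs_nat.
  rewrite <- !Z.abs_mul, !(Z.abs_eq (_ * _)) by nia. lia.
Qed.

End Pell.

From HB Require Import structures.
From mathcomp Require Import all_boot all_order all_algebra all_field.
From mathcomp Require Import ring zify.
Set Implicit Arguments. Unset Strict Implicit. Unset Printing Implicit Defensive.
Import Order.TTheory GRing.Theory Num.Theory.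
Local Open Scope ring_scope.

(* A squarefree k > 1 is not the square of a rational: the smallest prime
   factor l of k divides it exactly once, so the l-adic valuations of p^2 and
   k q^2 have different parities. *)
Lemma squarefree_nonsquare (k : nat) : (1 < k)%N -> squarefree k ->
  forall p q : nat, q <> 0%N -> (p * p <> k * (q * q))%N.
Proof.
move=> gt1_k sqf_k p q q_neq0 sq_pq.
set l := pdiv k.
have l_prime : prime l := pdiv_prime gt1_k.
have k_pos : (0 < k)%N by apply: ltnW.
have q_pos : (0 < q)%N by rewrite lt0n; apply/eqP.
have p_pos : (0 < p)%N.
  by rewrite lt0n; apply/eqP => p0; move: sq_pq; rewrite p0 => /esym/eqP;
     rewrite !muln_eq0 (gtn_eqF k_pos) (gtn_eqF q_pos).
have val_pos : (0 < logn l k)%N.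
  by rewrite logn_gt0 mem_primes l_prime k_pos pdiv_dvd.
have val_lt2 : (logn l k < 2)%N.
  rewrite ltnNge -pfactor_dvdn //; apply/negP => l2_dvd.
  by move: (sqf_k l l_prime); rewrite mulnn l2_dvd.
have := congr1 (logn l) sq_pq.
rewrite !lognM ?muln_gt0 ?k_pos ?q_pos ?p_pos //.
lia.
Qed.

Lemma natr_pell (R : comNzRingType) (x y k : nat) :
  (x * x = k * (y * y) + 1)%N -> (x%:R : R) ^+ 2 - k%:R * y%:R ^+ 2 = 1.
Proof.
move=> /(congr1 (fun n : nat => n%:R : R)) /=.
by rewrite natrD !natrM -!expr2 => ->; ring.
Qed.

Lemma pell_unit (C : numClosedFieldType) (x y k : nat) :
  (x * x = k * (y * y) + 1)%N -> (0 < y)%N -> (0 < k)%N ->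
  let mu : C := x%:R + y%:R * sqrtC k%:R in
  let mu' : C := x%:R - y%:R * sqrtC k%:R in
  [/\ 1 < mu, mu + mu' = 2 * x%:R & mu * mu' = 1].
Proof.
move=> pell_xy y_pos k_pos mu mu'; split.
- have x_pos : (0 < x)%N by rewrite lt0n; apply/eqP => x0; move: pell_xy; rewrite x0 addn1.
  rewrite /mu -[X in X < _]addr0; apply: ler_ltD; first by rewrite ler1n.
  by rewrite mulr_gt0 ?ltr0n ?sqrtC_gt0 ?ltr0n.
- by rewrite /mu /mu'; ring.
- transitivity ((x%:R : C) ^+ 2 - sqrtC k%:R ^+ 2 * y%:R ^+ 2); first by rewrite /mu /mu'; ring.
  by rewrite sqrtCK natr_pell.
Qed.

Notation o6 n := (@Ordinal 6 n isT).

Lemma sum6 (R : nmodType) (F : 'I_6 -> R) :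
  \sum_(i < 6) F i = F (o6 0) + F (o6 1) + F (o6 2) + F (o6 3) + F (o6 4) + F (o6 5).
Proof.
rewrite !big_ord_recl big_ord0 addr0 /= !addrA.
by congr (_ + _ + _ + _ + _ + _); congr F; apply/val_inj.
Qed.

Lemma nk_bracketE k u v : nk_bracket k u v = \row_(l < 6)
  (if val l == 4%N then u 0 (o6 0) * v 0 (o6 2) - u 0 (o6 2) * v 0 (o6 0)
        + u 0 (o6 1) * v 0 (o6 3) - u 0 (o6 3) * v 0 (o6 1)
   else if val l == 5%N then u 0 (o6 0) * v 0 (o6 3) - u 0 (o6 3) * v 0 (o6 0)
        + k%:R * (u 0 (o6 1) * v 0 (o6 2) - u 0 (o6 2) * v 0 (o6 1))
   else 0).
Proof.
apply/rowP => l; rewrite mxE /nk_bracket summxE.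
under eq_bigr => i _ do rewrite summxE sum6.
rewrite sum6 /nk_basis_bracket /= !mxE.
by case: l => [[|[|[|[|[|[|l]]]]]] Hl] //=; rewrite -!val_eqE /= !inordK //=; ring.
Qed.

(* The automorphism: row a holds the coordinates of the image of the a-th
   basis vector (matrices act on row vectors); c stands for k. *)
Definition aut_entry (x y c : rat) (a b : nat) : rat :=
  match a, b with
  | 0%N, 2%N => - y | 0%N, 3%N => - x | 1%N, 2%N => - x | 1%N, 3%N => - (c * y)
  | 2%N, 1%N => 1   | 2%N, 2%N => 2   | 3%N, 0%N => 1   | 3%N, 3%N => 2
  | 4%N, 4%N => x   | 4%N, 5%N => c * y | 5%N, 4%N => y | 5%N, 5%N => x
  | _, _ => 0
  end.

Definition aut_mx (x y c : rat) : 'M[rat]_6 :=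
  block_mx (\matrix_(i < 4, j < 4) aut_entry x y c i j) 0
           0 (\matrix_(i < 2, j < 2) aut_entry x y c i.+4 j.+4).

Lemma aut_mxE x y c a b (ha : (a < 6)%N) (hb : (b < 6)%N) :
  aut_mx x y c (Ordinal ha) (Ordinal hb) = aut_entry x y c a b.
Proof.
rewrite /aut_mx mxE.
case: (splitP (Ordinal ha : 'I_(4 + 2))) => i /= Hi; rewrite mxE;
case: (splitP (Ordinal hb : 'I_(4 + 2))) => j /= Hj; rewrite ?mxE Hi Hj //.
- by case: i j {Hi Hj} => [[|[|[|[|?]]]] ?] [[|[|?]] ?].
- by case: i j {Hi Hj} => [[|[|?]] ?] [[|[|[|[|?]]]] ?].
Qed.

Lemma aut_mx_morph k x y u v :
  nk_bracket k (u *m aut_mx x y k%:R) (v *m aut_mx x y k%:R) =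
  nk_bracket k u v *m aut_mx x y k%:R.
Proof.
rewrite !nk_bracketE; apply/rowP => l; rewrite !mxE !sum6 !aut_mxE.
by case: l => [[|[|[|[|[|[|l]]]]]] Hl] //=; rewrite !aut_mxE !mxE /=; ring.
Qed.

Lemma det_expand (R : comNzRingType) n (f : nat -> nat -> R) :
  \det (\matrix_(i < n.+1, l < n.+1) f i l) =
  \sum_(j < n.+1) f 0%N j * ((-1) ^+ j * \det (\matrix_(i < n, l < n) f i.+1 (bump j l))).
Proof.
rewrite (expand_det_row _ 0); apply: eq_bigr => j _; rewrite /cofactor.
have -> : row' 0 (col' j (\matrix_(i < n.+1, l < n.+1) f i l)) =
          \matrix_(i < n, l < n) f i.+1 (bump j l) by apply/matrixP => i l; rewrite !mxE.
by rewrite !mxE add0n.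
Qed.

Lemma det1f (R : comNzRingType) (f : nat -> nat -> R) :
  \det (\matrix_(i < 1, l < 1) f i l) = f 0%N 0%N.
Proof. by rewrite det_mx11 mxE. Qed.

Lemma det2f (R : comNzRingType) (f : nat -> nat -> R) :
  \det (\matrix_(i < 2, l < 2) f i l) = f 0%N 0%N * f 1%N 1%N - f 0%N 1%N * f 1%N 0%N.
Proof.
rewrite det_expand.
under eq_bigr => j _ do rewrite (@det1f _ (fun a b => f a.+1 (bump j b))).
by rewrite !big_ord_recr big_ord0 /= /bump /=; ring.
Qed.

Lemma det3f (R : comNzRingType) (f : nat -> nat -> R) :
  \det (\matrix_(i < 3, l < 3) f i l) =
    f 0%N 0%N * (f 1%N 1%N * f 2%N 2%N - f 1%N 2%N * f 2%N 1%N)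
  - f 0%N 1%N * (f 1%N 0%N * f 2%N 2%N - f 1%N 2%N * f 2%N 0%N)
  + f 0%N 2%N * (f 1%N 0%N * f 2%N 1%N - f 1%N 1%N * f 2%N 0%N).
Proof.
rewrite det_expand.
under eq_bigr => j _ do rewrite (@det2f _ (fun a b => f a.+1 (bump j b))).
by rewrite !big_ord_recr big_ord0 /= /bump /=; ring.
Qed.

Lemma det4f (R : comNzRingType) (f : nat -> nat -> R) :
  \det (\matrix_(i < 4, l < 4) f i l) =
  \sum_(j < 4) f 0%N j * ((-1) ^+ j *
    (f 1%N (bump j 0) * (f 2%N (bump j 1) * f 3%N (bump j 2) - f 2%N (bump j 2) * f 3%N (bump j 1))
  - f 1%N (bump j 1) * (f 2%N (bump j 0) * f 3%N (bump j 2) - f 2%N (bump j 2) * f 3%N (bump j 0))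
  + f 1%N (bump j 2) * (f 2%N (bump j 0) * f 3%N (bump j 1) - f 2%N (bump j 1) * f 3%N (bump j 0)))).
Proof.
rewrite det_expand; apply: eq_bigr => j _.
by rewrite (@det3f _ (fun a b => f a.+1 (bump j b))).
Qed.

Lemma char_poly_mxE (R : nzRingType) n (f : nat -> nat -> R) :
  char_poly_mx (\matrix_(i < n, j < n) f i j) =
  \matrix_(i < n, j < n) ('X *+ (i == j :> nat) - (f i j)%:P).
Proof. by apply/matrixP => i j; rewrite !mxE. Qed.

(* The two factors of the characteristic polynomial: PM on span(X1,..,X4),
   PN on the center. *)
Definition PM (R : comNzRingType) (a : R) : {poly R} :=
  ('X^2 - 2 * 'X) ^+ 2 + (2 * a)%:P * ('X^2 - 2 * 'X) + 1.
Definition PN (R : comNzRingType) (a : R) : {poly R} :=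
  'X^2 - (2 * a)%:P * 'X + 1.
Arguments PM {R}. Arguments PN {R}.

(* When x^2 - c y^2 = 1 the characteristic polynomial of the automorphism is
   PM x * PN x (in general, the constant terms 1 are x^2 - c y^2). *)
Lemma char_aut_mx x y c : x ^+ 2 - c * y ^+ 2 = 1 ->
  char_poly (aut_mx x y c) = PM x * PN x.
Proof.
move=> norm1.
have -> : PM x * PN x =
    (('X^2 - 2 * 'X) ^+ 2 + (2 * x)%:P * ('X^2 - 2 * 'X) + (x ^+ 2 - c * y ^+ 2)%:P)
    * ('X^2 - (2 * x)%:P * 'X + (x ^+ 2 - c * y ^+ 2)%:P) by rewrite norm1.
rewrite /char_poly /aut_mx (char_block_diag_mx (m:=4) (n:=2)) (det_ublock (n1:=4) (n2:=2)).
rewrite char_poly_mxE (@char_poly_mxE _ 2 (fun a b => aut_entry x y c a.+4 b.+4)).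
rewrite (@det4f _ (fun a b => 'X *+ (a == b)%N - (aut_entry x y c a b)%:P)).
rewrite (@det2f _ (fun a b => 'X *+ (a == b)%N - (aut_entry x y c a.+4 b.+4)%:P)).
by rewrite !big_ord_recr big_ord0 /= /bump /=; ring.
Qed.

Lemma map_PM (R S : comNzRingType) (f : {rmorphism R -> S}) a :
  map_poly f (PM a) = PM (f a).
Proof.
rewrite /PM !(rmorphD, rmorphM, rmorphB, rmorphN, rmorphXn, rmorph1, rmorph_nat) /=.
by rewrite !(map_polyX f, map_polyC f) ?rmorphM ?rmorph_nat; ring.
Qed.

Lemma map_PN (R S : comNzRingType) (f : {rmorphism R -> S}) a :
  map_poly f (PN a) = PN (f a).
Proof.
rewrite /PN !(rmorphD, rmorphM, rmorphB, rmorphN, rmorphXn, rmorph1, rmorph_nat) /=.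
by rewrite !(map_polyX f, map_polyC f) ?rmorphM ?rmorph_nat; ring.
Qed.

Lemma PM_PN_coef0 (R : comNzRingType) (a : R) : (PM a * PN a)`_0 = 1.
Proof. by rewrite -horner_coef0 /PM /PN !hornerE; ring. Qed.

Lemma det_of_char_coef0 (R : comNzRingType) n (A : 'M[R]_n) :
  (char_poly A)`_0 = 1 -> \det A = (-1) ^+ n.
Proof. by move=> coef0; rewrite -[\det A](signrMK n) -char_poly_det coef0 mulr1. Qed.

Lemma polyOver_int_map (p : {poly int}) :
  map_poly (intr : int -> rat) p \is a polyOver Num.int.
Proof. by apply/polyOverP => i; rewrite coef_map /=. Qed.

Lemma PM_PN_integral (x : nat) :
  PM (x%:R : rat) * PN (x%:R : rat) \is a polyOver Num.int.
Proof.
have -> : (x%:R : rat) = intr (x%:R : int) by rewrite rmorph_nat.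
by rewrite -map_PM -map_PN -rmorphM polyOver_int_map.
Qed.

(* The six roots of PM a * PN a, given m + m' = 2 a and m m' = 1. *)
Definition spectrum (C : numClosedFieldType) (m m' : C) : seq C :=
  [:: 1 + 'i * sqrtC (m - 1); 1 - 'i * sqrtC (m - 1);
      1 + sqrtC (1 - m'); 1 - sqrtC (1 - m'); m; m'].

Lemma XsubC_mul (R : comNzRingType) (a b : R) :
  ('X - a%:P) * ('X - b%:P) = 'X^2 - (a + b)%:P * 'X + (a * b)%:P.
Proof. by rewrite polyCD polyCM; ring. Qed.

(* PN a = (X - m)(X - m') and PM a = (s + m)(s + m') with s = X^2 - 2X, and
   X^2 - 2X + c splits as (X - 1 - r)(X - 1 + r) when r^2 = 1 - c. *)
Lemma PM_PN_factor (C : numClosedFieldType) (a m m' : C) :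
  m + m' = 2 * a -> m * m' = 1 ->
  PM a * PN a = \prod_(r <- spectrum m m') ('X - r%:P).
Proof.
move=> sum_m prod_m.
have split_quad (r c : C) : r ^+ 2 = 1 - c ->
    ('X - (1 + r)%:P) * ('X - (1 - r)%:P) = 'X^2 - 2 * 'X + c%:P.
  move=> r2; rewrite XsubC_mul; have -> : (1 + r) * (1 - r) = c.
    by transitivity (1 - r ^+ 2); [ring | rewrite r2; ring].
  ring.
have split_m : ('X - (1 + 'i * sqrtC (m - 1))%:P) * ('X - (1 - 'i * sqrtC (m - 1))%:P)
               = 'X^2 - 2 * 'X + m%:P.
  by apply: split_quad; rewrite exprMn sqrCi sqrtCK; ring.
have split_m' := split_quad (sqrtC (1 - m')) m' (sqrtCK _).
have -> : PM a * PN a =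
    (('X^2 - 2 * 'X) ^+ 2 + (m + m')%:P * ('X^2 - 2 * 'X) + (m * m')%:P) *
    ('X^2 - (m + m')%:P * 'X + (m * m')%:P).
  by rewrite sum_m prod_m polyC1.
transitivity (('X^2 - 2 * 'X + m%:P) * ('X^2 - 2 * 'X + m'%:P) *
              (('X - m%:P) * ('X - m'%:P))).
  by rewrite XsubC_mul; ring.
by rewrite -split_m -split_m' !big_cons big_nil; ring.
Qed.

Lemma gt1_norm_sq (C : numClosedFieldType) (z : C) : 1 < z * z^* -> 1 < `|z|.
Proof.
by move=> gt1; rewrite -(ltr_pXn2r (_ : 0 < 2)%N) ?expr1n ?normCK ?qualifE //=.
Qed.

Lemma spectrum_norms (C : numClosedFieldType) (m m' : C) : 1 < m -> m * m' = 1 ->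
  [/\ count (fun z => `|z| < 1) (spectrum m m') = 2%N,
      count (fun z => 1 < `|z|) (spectrum m m') = 4%N
    & all (fun z => `|z| != 1) (spectrum m m')].
Proof.
move=> gt1_m prod_m.
have m_pos : 0 < m by apply: lt_trans gt1_m.
have m'E : m' = m^-1.
  by apply: (mulfI (lt0r_neq0 m_pos)); rewrite prod_m divff // lt0r_neq0.
have m'_pos : 0 < m' by rewrite m'E invr_gt0.
have m'_lt1 : m' < 1 by rewrite m'E invf_lt1.
set t := sqrtC (m - 1); set v := sqrtC (1 - m').
have t_real : t \is Num.real by rewrite ger0_real // sqrtC_ge0 subr_ge0 ltW.
have v_pos : 0 < v by rewrite sqrtC_gt0 subr_gt0.
have v_lt1 : v < 1.
  rewrite -[X in _ < X]sqrtC1 ltr_sqrtC ?qualifE /= ?subr_ge0 ?(ltW m'_lt1) //.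
  by rewrite ltrBlDr ltrDl.
(* |1 + i w|^2 = 1 + w^2 = m for real w with w^2 = m - 1 *)
have norm_iw (w : C) : w \is Num.real -> w ^+ 2 = m - 1 -> 1 < `|1 + 'i * w|.
  move=> w_real w2; apply: gt1_norm_sq.
  rewrite rmorphD rmorphM /= conjCi (conj_Creal w_real) conjC1.
  suff -> : (1 + 'i * w) * (1 + - 'i * w) = m by [].
  by transitivity (1 - 'i * 'i * w ^+ 2); [ring | rewrite mulCii w2; ring].
have n1 : 1 < `|1 + 'i * t| := norm_iw t t_real (sqrtCK _).
have n2 : 1 < `|1 - 'i * t|.
  by rewrite -mulrN; apply: norm_iw; rewrite ?rpredN // sqrrN sqrtCK.
have n3 : 1 < `|1 + v| by rewrite ger0_norm ?ltrDl // addr_ge0 // ltW.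
have n4 : `|1 - v| < 1 by rewrite ger0_norm ?subr_ge0 ?ltW // ltrBlDr ltrDl.
have n5 : 1 < `|m| by rewrite ger0_norm ?ltW.
have n6 : `|m'| < 1 by rewrite ger0_norm ?ltW.
rewrite /spectrum /=; split.
- by rewrite n4 n6 (lt_gtF n1) (lt_gtF n2) (lt_gtF n3) (lt_gtF n5).
- by rewrite n1 n2 n3 n5 (lt_gtF n4) (lt_gtF n6).
- by rewrite (gt_eqF n1) (gt_eqF n2) (gt_eqF n3) (gt_eqF n5) (lt_eqF n4) (lt_eqF n6).
Qed.

Lemma eigenvalues_perm n (A : 'M[rat]_n) (rs : seq algC) :
  map_poly ratr (char_poly A) = \prod_(r <- rs) ('X - r%:P) ->
  perm_eq (eigenvalues A) rs.
Proof.
rewrite /eigenvalues; case: closed_field_poly_normal => es /= es_def char_rs.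
have monic_char : map_poly (ratr : rat -> algC) (char_poly A) \is monic.
  by rewrite map_monic char_poly_monic.
by apply: prod_XsubC_eq; rewrite -char_rs es_def (monicP monic_char) scale1r.
Qed.

Lemma spectrum_signature n (A : 'M[rat]_n) (rs : seq algC) (p q : nat) :
  map_poly ratr (char_poly A) = \prod_(r <- rs) ('X - r%:P) ->
  count (fun z => `|z| < 1) rs = p -> count (fun z => 1 < `|z|) rs = q ->
  all (fun z => `|z| != 1) rs ->
  hyperbolic A /\ has_signature A p q.
Proof.
move=> /eigenvalues_perm eig_rs count_lt1 count_gt1 /allP rs_hyp; split.
  by move=> z; rewrite (perm_mem eig_rs) => /rs_hyp.
by left; rewrite /n_contracting /n_expanding !(permP eig_rs).
Qed.

Theorem proposition3p2 (k : nat) (hk : (1 < k)%N) (hsf : squarefree k) :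
  exists A : 'M[rat]_6,
    is_nk_automorphism k A /\ anosov A /\ has_signature A 2 4.
Proof.
have k_pos : (0 < k)%N by apply: ltnW.
have [x [y [pell_xy y_neq0]]] :=
  Pell.pell_nat k (elimT ssrnat.leP k_pos) (squarefree_nonsquare hk hsf).
have y_pos : (0 < y)%N by rewrite lt0n; apply/eqP.
pose A := aut_mx x%:R y%:R k%:R.
have charA : char_poly A = PM x%:R * PN x%:R by apply/char_aut_mx/natr_pell.
have detA : \det A = 1.
  rewrite det_of_char_coef0; last by rewrite charA PM_PN_coef0.
  by rewrite -signr_odd expr0.
have [gt1_mu sum_mu prod_mu] := pell_unit algC pell_xy y_pos k_pos.
have [count_lt1 count_gt1 no_unit] := spectrum_norms gt1_mu prod_mu.
have [hyp_A sig_A] : hyperbolic A /\ has_signature A 2 4.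
  apply: spectrum_signature count_lt1 count_gt1 no_unit.
  by rewrite charA rmorphM /= map_PM map_PN rmorph_nat (PM_PN_factor sum_mu prod_mu).
exists A; split; [split | split; [split; [exact: hyp_A | split] | exact: sig_A]].
- by rewrite unitmxE detA unitr1.
- exact: aut_mx_morph.
- by rewrite charA PM_PN_integral.
- by left.
Qed.
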